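(* Let $n\ge3$ be odd and $m=\frac{n+1}{2}$. There exist rational normal curves $R_1,\dots,R_m\subset\mathbb{P}^n_{\mathbb{C}}$ such that: for each $1\le j\le m-1$, $R_j$ and $R_{j+1}$ meet transversally (nodally) in exactly $n+1$ points, which are in general linear position; the intersection sets $R_j\cap R_{j+1}$ for different $j$ are pairwise disjoint; and $R_i\cap R_j=\emptyset$ whenever $|i-j|\ge 2$. In other words, rational normal curve chains in $\mathbb{P}^n_{\mathbb{C}}$ exist.
   Context: Work over $\mathbb{C}$. A rational normal curve in $\mathbb{P}^n_{\mathbb{C}}$ is a curve projectively equivalent to the image of $[s:t]\mapsto[s^n:s^{n-1}t:\dots:t^n]$. For $n\ge3$ odd, a rational normal curve chain in $\mathbb{P}^n_{\mathbb{C}}$ is the reduced union $C=R_1\cup\dots\cup R_{(n+1)/2}$ of rational normal curves as in the claim: consecutive curves $R_j,R_{j+1}$ meet transversally in exactly $n+1$ points in general linear position, these intersection sets are pairwise disjoint, and there are no other intersections among the $R_i$. *)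

(* Projective space P^n over C is modelled by nonzero row
   vectors in C^(n+1) up to nonzero scalars, where C = R[i] = complex R for a
   realType R (every realType is the real numbers, so R[i] is the complex
   numbers). *)
From HB Require Import structures.
From mathcomp Require Import all_boot all_order all_algebra.
From mathcomp Require Import complex.
From mathcomp Require Import reals.
Set Implicit Arguments. Unset Strict Implicit. Unset Printing Implicit Defensive.
Import Order.TTheory GRing.Theory Num.Theory.
Local Open Scope ring_scope.

Section Proj.
Variable (C : fieldType) (n : nat).

Definition proj_eq (x y : 'rV[C]_n.+1) : Prop :=
  exists c : C, c != 0 /\ y = c *: x.

Definition rnc_param (s t : C) : 'rV[C]_n.+1 :=
  \row_(i < n.+1) (s ^+ (n - i) * t ^+ i).

(* partial derivatives of the parametrization (spanning the affine cone over
   the tangent line) *)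
Definition rnc_ds (s t : C) : 'rV[C]_n.+1 :=
  \row_(i < n.+1) ((n - i)%:R * s ^+ (n - i).-1 * t ^+ i).
Definition rnc_dt (s t : C) : 'rV[C]_n.+1 :=
  \row_(i < n.+1) (i%:R * s ^+ (n - i) * t ^+ i.-1).

(* The rational normal curve R_A := image of the standard one under the
   projective transformation given by the invertible matrix A. *)
Definition rnc_at (A : 'M[C]_n.+1) (s t : C) (x : 'rV[C]_n.+1) : Prop :=
  (s != 0 \/ t != 0) /\ proj_eq (rnc_param s t *m A) x.

Definition on_rnc (A : 'M[C]_n.+1) (x : 'rV[C]_n.+1) : Prop :=
  x != 0 /\ exists s t, rnc_at A s t x.

(* tangent-line matrix of R_A at parameter (s,t): its row space is the
   2-dimensional subspace of C^(n+1) corresponding to the tangent line *)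
Definition rnc_tangent (A : 'M[C]_n.+1) (s t : C) : 'M[C]_(2, n.+1) :=
  col_mx (rnc_ds s t *m A) (rnc_dt s t *m A).

(* R_A and R_B meet transversally at x: the two tangent lines at x are
   distinct, i.e. the sum of the two 2-dimensional subspaces (which share the
   line of x) is 3-dimensional. *)
Definition transversal_at (A B : 'M[C]_n.+1) (x : 'rV[C]_n.+1) : Prop :=
  forall s t s' t', rnc_at A s t x -> rnc_at B s' t' x ->
    \rank (col_mx (rnc_tangent A s t) (rnc_tangent B s' t')) = 3%N.

(* R_A and R_B meet transversally in exactly n+1 points which are in general
   linear position: the common points are exactly the points represented by
   the rows of an invertible matrix P (n+1 linearly independent, hence
   distinct, points of P^n), and the intersection is transversal at each. *)
Definition rnc_meet_nodally_gen (A B : 'M[C]_n.+1) : Prop :=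
  exists P : 'M[C]_n.+1,
    [/\ P \in unitmx,
        (forall k : 'I_n.+1, on_rnc A (row k P) /\ on_rnc B (row k P)),
        (forall x, on_rnc A x -> on_rnc B x ->
           exists k : 'I_n.+1, proj_eq (row k P) x) &
        (forall k : 'I_n.+1, transversal_at A B (row k P))].

End Proj.

(* Curve j of the chain (2j < n) is the monomial curve
     [s:t] |-> (w_j(i) s^(n - e_j(i)) t^e_j(i))_i,   e_j(i) = 2j - i mod n+1,
   with weights w_j(i) = ceil(i/2) + 1 for i <= 2j and 1 otherwise.  Off the
   coordinate torus it only has the coordinate points e_2j and e_(2j+1), so
   distinct curves meet on the torus, where a point of curve j reads
   (g w_j(i) u^e_j(i))_i.  Passing from j to j+1 adds 2 to every exponent
   except at i = 2j+1, 2j+2, where the weight j+2 appears; comparing these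
   coordinates shows that R_j and R_(j+1) meet exactly in the n+1 points with
   u^(n+1) = j+2, whose coordinates form a Vandermonde matrix times an
   invertible one.  There Euler's relation puts the s-derivative of R_(j+1) in
   the span of the other three tangent vectors, which are independent already
   on the coordinates 2j, 2j+1, 2j+2, so the tangent lines are distinct.  For
   k >= j+2 the coordinates x, x', x'' of index 2j+1, 2j+2, 2j+3 of a torus
   point satisfy x x'' = x'^2 on R_j but (j+2) x x'' = (j+3) x'^2 on R_k. *)

From HB Require Import structures.
From mathcomp Require Import all_boot all_order all_algebra fingroup perm separable.
From mathcomp Require Import complex reals.
From mathcomp Require Import zify ring.
Set Implicit Arguments. Unset Strict Implicit. Unset Printing Implicit Defensive.
Import Order.TTheory GRing.Theory Num.Theory.
Local Open Scope ring_scope.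

Section RationalNormalCurve.
Variables (C : fieldType) (n : nat).

Lemma rnc_param_scale (s w : C) : rnc_param n s (w * s) = s ^+ n *: rnc_param n 1 w.
Proof.
apply/matrixP => a i.
by rewrite !mxE expr1n mul1r exprMn mulrCA -exprD subnK 1?mulrC // -ltnS.
Qed.

Lemma rnc_ds_scale (s w : C) : rnc_ds n s (w * s) = s ^+ n.-1 *: rnc_ds n 1 w.
Proof.
apply/matrixP => a i; rewrite !mxE expr1n mulr1 exprMn.
have [-> | i_neq_n] := eqVneq (i : nat) n; first by rewrite subnn !mul0r mulr0.
have -> : s ^+ n.-1 = s ^+ (n - i).-1 * s ^+ i.
  by rewrite -exprD; congr (_ ^+ _); move: (ltn_ord i); lia.
ring.
Qed.

Lemma rnc_dt_scale (s w : C) : rnc_dt n s (w * s) = s ^+ n.-1 *: rnc_dt n 1 w.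
Proof.
apply/matrixP => a i; rewrite !mxE expr1n mulr1 exprMn.
have [-> | i_gt0] := eqVneq (i : nat) 0%N; first by rewrite !mul0r mulr0.
have -> : s ^+ n.-1 = s ^+ (n - i) * s ^+ i.-1.
  by rewrite -exprD; congr (_ ^+ _); move: (ltn_ord i); lia.
ring.
Qed.

Lemma rnc_tangent_scale (A : 'M[C]_n.+1) (s w : C) :
  rnc_tangent A s (w * s) = s ^+ n.-1 *: rnc_tangent A 1 w.
Proof.
by rewrite /rnc_tangent rnc_ds_scale rnc_dt_scale -!scalemxAl -scale_col_mx.
Qed.

Lemma rnc_euler (w : C) : rnc_ds n 1 w + w *: rnc_dt n 1 w = n%:R *: rnc_param n 1 w.
Proof.
apply/matrixP => a i; rewrite !mxE !expr1n !mulr1 !mul1r.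
have [-> | i_gt0] := eqVneq (i : nat) 0%N; first by rewrite !mul0r mulr0 addr0 subn0.
by rewrite mulrCA -exprS prednK ?lt0n // -mulrDl -natrD subnK // -ltnS.
Qed.

Lemma rnc_euler_mx (A : 'M[C]_n.+1) (w : C) :
  rnc_ds n 1 w *m A + w *: (rnc_dt n 1 w *m A) = n%:R *: (rnc_param n 1 w *m A).
Proof. by rewrite !scalemxAl -mulmxDl rnc_euler. Qed.

Lemma rnc_at_affine (A : 'M[C]_n.+1) (s t : C) x : s != 0 -> rnc_at A s t x ->
  exists2 g, g != 0 & x = g *: (rnc_param n 1 (t / s) *m A).
Proof.
move=> s_neq0 [_ [c [c_neq0 ->]]].
exists (c * s ^+ n); first by rewrite mulf_neq0 ?expf_neq0.
by rewrite -{1}(divfK s_neq0 t) rnc_param_scale -scalemxAl scalerA.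
Qed.

End RationalNormalCurve.

Section RowSpaces.
Variables (F : fieldType) (k : nat).

Lemma mxrank_col_mx_scale m1 m2 (A : 'M[F]_(m1, k)) (B : 'M_(m2, k)) a b :
  a != 0 -> b != 0 -> \rank (col_mx (a *: A) (b *: B)) = \rank (col_mx A B).
Proof.
move=> a_neq0 b_neq0.
by rewrite -!addsmxE (adds_eqmx (eqmx_scale _ a_neq0) (eqmx_scale _ b_neq0)).
Qed.

Lemma mxrank_col_mx_span (a b c d : 'rV[F]_k) (x y z : F) :
  c = x *: a + y *: b + z *: d ->
  \rank (col_mx (col_mx a b) (col_mx c d)) = \rank (col_mx (col_mx a b) d).
Proof.
move=> c_span; rewrite -!addsmxE; apply/eqmx_rank/andP.
have sub_ab u : (u <= a)%MS || (u <= b)%MS -> (u <= col_mx a b + d)%MS.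
  move=> /orP[] /submx_trans; apply; apply: submx_trans (addsmxSl _ d);
    by rewrite -addsmxE (addsmxSl, addsmxSr).
split; rewrite addsmx_sub addsmxSl //=.
  rewrite col_mx_sub addsmxSr c_span andbT.
  by rewrite !addmx_sub ?scalemx_sub ?addsmxSr ?sub_ab ?submx_refl ?orbT.
by apply: submx_trans (addsmxSr _ _); rewrite -addsmxE addsmxSr.
Qed.

Lemma row_free_col_mx3 (a b d : 'rV[F]_k) :
  (forall x y z : F, x *: a + y *: b + z *: d = 0 -> [/\ x = 0, y = 0 & z = 0]) ->
  row_free (col_mx (col_mx a b) d).
Proof.
move=> indep; apply/inj_row_free => v.
rewrite -[v]hsubmxK -[lsubmx v]hsubmxK !mul_row_col.
rewrite [lsubmx (lsubmx v)]mx11_scalar [rsubmx (lsubmx v)]mx11_scalar.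
rewrite [rsubmx v]mx11_scalar.
by rewrite !mul_scalar_mx => /indep [-> -> ->]; rewrite !raddf0 !row_mx0.
Qed.

End RowSpaces.

Lemma nth_roots_uniq (C : numClosedFieldType) (N : nat) (K : C) :
  (0 < N)%N -> K != 0 ->
  exists W : seq C, [/\ size W = N, uniq W & forall z, (z \in W) = (z ^+ N == K)].
Proof.
move=> N_gt0 K_neq0.
have [W pE] := closed_field_poly_normal ('X^N - K%:P : {poly C}).
rewrite lead_coefXnsubC // scale1r in pE.
exists W; split.
- by have := size_XnsubC K N_gt0; rewrite pE size_prod_XsubC => -[].
- rewrite -separable_prod_XsubC -pE unlock; apply: Pdiv.ClosedField.root_coprimep => z.
  rewrite /root !hornerE subr_eq0 => /eqP zK.
  rewrite derivB derivC subr0 derivXn hornerMn !hornerE mulrn_eq0 negb_or -lt0n N_gt0 /=.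
  apply: contraNneq K_neq0 => /eqP; rewrite expf_eq0 => /andP[_ /eqP z0].
  by rewrite -zK z0 expr0n gtn_eqF.
- by move=> z; rewrite -root_prod_XsubC -pE /root !hornerE subr_eq0.
Qed.

Section MonomialCurve.
Variables (C : fieldType) (n : nat) (p : 'S_n.+1) (d : 'rV[C]_n.+1).

Definition monomial_mx : 'M[C]_n.+1 := perm_mx p^-1%g *m diag_mx d.

Local Notation M := monomial_mx.

Lemma mul_monomial_mx (r : 'rV[C]_n.+1) i : (r *m M) 0 i = r 0 (p i) * d 0 i.
Proof. by rewrite mulmxA -col_permE mul_mx_diag !mxE. Qed.

Lemma monomial_paramE (s t : C) i :
  (rnc_param n s t *m M) 0 i = s ^+ (n - p i) * t ^+ p i * d 0 i.
Proof. by rewrite mul_monomial_mx mxE. Qed.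

Lemma monomial_affineE (u : C) i : (rnc_param n 1 u *m M) 0 i = u ^+ p i * d 0 i.
Proof. by rewrite monomial_paramE expr1n mul1r. Qed.

Lemma monomial_dsE (u : C) i :
  (rnc_ds n 1 u *m M) 0 i = (n - p i)%:R * u ^+ p i * d 0 i.
Proof. by rewrite mul_monomial_mx mxE expr1n mulr1. Qed.

Lemma monomial_dtE (u : C) i :
  (rnc_dt n 1 u *m M) 0 i = (p i)%:R * u ^+ (p i).-1 * d 0 i.
Proof. by rewrite mul_monomial_mx mxE expr1n mulr1. Qed.

Lemma monomial_scale_paramE (c s t : C) i :
  (c *: (rnc_param n s t *m M)) 0 i = c * (s ^+ (n - p i) * t ^+ p i * d 0 i).
Proof. by rewrite mxE monomial_paramE. Qed.

Lemma monomial_scale_affineE (g u : C) i :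
  (g *: (rnc_param n 1 u *m M)) 0 i = g * (u ^+ p i * d 0 i).
Proof. by rewrite mxE monomial_affineE. Qed.

Hypothesis d_neq0 : forall i, d 0 i != 0.

Lemma monomial_mx_unit : M \in unitmx.
Proof.
rewrite unitmx_mul unitmx_perm unitmxE det_diag unitfE.
by apply/prodf_neq0 => i _.
Qed.

Lemma on_monomial_affine (u g : C) : u != 0 -> g != 0 ->
  on_rnc M (g *: (rnc_param n 1 u *m M)).
Proof.
move=> u_neq0 g_neq0; split.
  by apply/rV0Pn; exists 0; rewrite monomial_scale_affineE !mulf_neq0 ?expf_neq0.
by exists 1, u; split; [left; exact: oner_neq0 | exists g].
Qed.

Lemma on_monomial_cases x : on_rnc M x ->
  (forall i, x 0 i != 0) \/
  exists2 i, p i \in [:: ord0; ord_max] & forall k, k != i -> x 0 k = 0.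
Proof.
move=> [_ [s [t [_ [c [c_neq0 ->]]]]]].
have [s0 | s_neq0] := eqVneq s 0.
  right; exists (p^-1%g ord_max); first by rewrite permKV !inE eqxx orbT.
  move=> k k_neq; have pk : p k != ord_max.
    by apply: contra_neq k_neq => <-; rewrite permK.
  have lt_pk : (p k < n)%N by move: pk (ltn_ord (p k)); rewrite -(inj_eq val_inj) /=; lia.
  by rewrite monomial_scale_paramE s0 expr0n subn_eq0 leqNgt lt_pk !mul0r mulr0.
have [t0 | t_neq0] := eqVneq t 0.
  right; exists (p^-1%g ord0); first by rewrite permKV !inE eqxx.
  move=> k k_neq; have pk : p k != ord0 by apply: contra_neq k_neq => <-; rewrite permK.
  rewrite monomial_scale_paramE t0 expr0n (negPf (pk : (p k : nat) != 0%N)).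
  by rewrite mulr0 mul0r mulr0.
by left=> k; rewrite monomial_scale_paramE !mulf_neq0 ?expf_neq0.
Qed.

Lemma rnc_at_monomial_torus (s t : C) x : (0 < n)%N -> rnc_at M s t x ->
  (forall i, x 0 i != 0) -> s != 0 /\ t != 0.
Proof.
move=> n_gt0 [_ [c [_ ->]]] x_neq0.
have := x_neq0 (p^-1%g ord0); have := x_neq0 (p^-1%g ord_max).
rewrite !monomial_scale_paramE !permKV /= subn0 subnn !expr0 mul1r mulr1.
by move=> /eqP ht /eqP hs; split; apply/eqP => z; [apply: hs | apply: ht];
  rewrite z expr0n gtn_eqF // !mul0r mulr0.
Qed.

Lemma monomial_torus_affine x : (0 < n)%N -> on_rnc M x -> (forall i, x 0 i != 0) ->
  exists u g, [/\ u != 0, g != 0 & x = g *: (rnc_param n 1 u *m M)].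
Proof.
move=> n_gt0 [_ [s [t x_at]]] x_neq0.
have [s_neq0 t_neq0] := rnc_at_monomial_torus n_gt0 x_at x_neq0.
have [g g_neq0 ->] := rnc_at_affine s_neq0 x_at.
by exists (t / s), g; rewrite mulf_neq0 ?invr_eq0.
Qed.

Lemma monomial_affine_inj (u v g g' : C) : (0 < n)%N -> g != 0 ->
  g *: (rnc_param n 1 u *m M) = g' *: (rnc_param n 1 v *m M) -> u = v.
Proof.
move=> n_gt0 g_neq0 /matrixP e.
have coord k : g * (u ^+ p k * d 0 k) = g' * (v ^+ p k * d 0 k).
  by move: (e 0 k); rewrite !monomial_scale_affineE.
have := coord (p^-1%g ord0); have := coord (p^-1%g (inord 1)).
rewrite !permKV /= inordK // expr1 !expr0 !mul1r => eq1 /(mulIf (d_neq0 _)) gg.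
by move: eq1; rewrite -gg => /(mulfI g_neq0) /(mulIf (d_neq0 _)).
Qed.

Lemma monomial_rnc_at_affine (s t u g : C) : (0 < n)%N -> u != 0 -> g != 0 ->
  rnc_at M s t (g *: (rnc_param n 1 u *m M)) -> s != 0 /\ t = u * s.
Proof.
move=> n_gt0 u_neq0 g_neq0 x_at.
have [|s_neq0 _] := rnc_at_monomial_torus n_gt0 x_at.
  by move=> i; rewrite monomial_scale_affineE !mulf_neq0 ?expf_neq0.
have [g' _ e] := rnc_at_affine s_neq0 x_at.
by rewrite (monomial_affine_inj n_gt0 g_neq0 e) divfK.
Qed.

Lemma monomial_quadric (g u : C) x a b c : (p a + p c = (p b).*2)%N ->
  x = g *: (rnc_param n 1 u *m M) ->
  x 0 a * x 0 c * d 0 b ^+ 2 = x 0 b ^+ 2 * (d 0 a * d 0 c).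
Proof.
move=> pabc ->; rewrite !monomial_scale_affineE.
transitivity (g ^+ 2 * (u ^+ p a * u ^+ p c) * (d 0 a * d 0 c) * d 0 b ^+ 2); first ring.
by rewrite -exprD pabc -addnn exprD; ring.
Qed.

End MonomialCurve.

Lemma monomial_meet_torus (C : fieldType) n (p p' : 'S_n.+1) (d d' : 'rV[C]_n.+1) x :
  (0 < n)%N -> (forall i, d 0 i != 0) -> (forall i, d' 0 i != 0) ->
  (forall i, p i \in [:: ord0; ord_max] -> p' i \in [:: ord0; ord_max] -> False) ->
  on_rnc (monomial_mx p d) x -> on_rnc (monomial_mx p' d') x -> forall i, x 0 i != 0.
Proof.
move=> n_gt0 d_neq0 d'_neq0 no_common hx hx'.
have [/rV0Pn [i0 xi0_neq0] _] := hx.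
case: (on_monomial_cases d_neq0 hx) => [//|[i pi x_supp]].
have i0i : i0 = i by apply: contraNeq xi0_neq0 => /x_supp ->.
case: (on_monomial_cases d'_neq0 hx') => [x_neq0'|[i' pi' x_supp']].
  have [k k_neq] : exists k : 'I_n.+1, k != i.
    have [->|i_neq0] := eqVneq i ord0; last by exists ord0; rewrite eq_sym.
    by exists ord_max; rewrite -(inj_eq val_inj) /= -lt0n.
  by have := x_neq0' k; rewrite x_supp.
have i0i' : i0 = i' by apply: contraNeq xi0_neq0 => /x_supp' ->.
by case: (no_common i pi); rewrite -i0i i0i'.
Qed.

Section Chain.
Variables (C : numClosedFieldType) (n : nat).

(* The exponent 2j - i is computed in 'I_n.+1 = Z/(n+1). *)
Definition chain_perm (j : nat) : 'S_n.+1 :=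
  perm (inv_inj (subKr (inZp (2 * j) : 'I_n.+1))).

Definition chain_weight (j : nat) : 'rV[C]_n.+1 :=
  \row_i ((if (i <= 2 * j)%N then uphalf i else 0).+1)%:R.

Definition chain_mx (j : nat) : 'M[C]_n.+1 := monomial_mx (chain_perm j) (chain_weight j).

Lemma chain_permE j i : (2 * j < n)%N ->
  chain_perm j i = (if (i <= 2 * j)%N then 2 * j - i else 2 * j + n.+1 - i)%N :> nat.
Proof.
move=> lt_2j_n; have := ltn_ord i.
rewrite permE /= (modn_small (_ : 2 * j < n.+1)%N); last lia.
have [-> _ | i_gt0 lt_i] := posnP i.
  by rewrite leq0n !subn0 modnn addn0 modn_small // ltnW.
rewrite [((n.+1 - i) %% _)%N]modn_small; last lia.
case: leqP => le_i_2j.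
  rewrite (_ : 2 * j + (n.+1 - i) = 2 * j - i + n.+1)%N; last lia.
  by rewrite modnDr modn_small; lia.
by rewrite modn_small; lia.
Qed.

Lemma chain_perm_le j (i : 'I_n.+1) : (2 * j < n)%N -> (i <= 2 * j)%N ->
  chain_perm j i = (2 * j - i)%N :> nat.
Proof. by move=> lt_2j_n le_i_2j; rewrite chain_permE // le_i_2j. Qed.

Lemma chain_perm_gt j (i : 'I_n.+1) : (2 * j < n)%N -> (2 * j < i)%N ->
  chain_perm j i = (2 * j + n.+1 - i)%N :> nat.
Proof. by move=> lt_2j_n /ltn_geF lt_2j_i; rewrite chain_permE // lt_2j_i. Qed.

Lemma chain_weight_neq0 j i : chain_weight j 0 i != 0.
Proof. by rewrite mxE pnatr_eq0. Qed.

Lemma chain_mx_unit j : chain_mx j \in unitmx.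
Proof. exact/monomial_mx_unit/chain_weight_neq0. Qed.

Lemma chain_perm_endpoint j i : (2 * j < n)%N ->
  (chain_perm j i \in [:: ord0; ord_max]) =
  ((i == 2 * j :> nat) || (i == (2 * j).+1 :> nat)).
Proof.
move=> lt_2j_n; rewrite !inE -!(inj_eq val_inj) /= chain_permE //.
move: (ltn_ord i); case: (leqP i (2 * j)) => ? ?; apply/idP/idP; lia.
Qed.

Lemma chain_meet_torus j k x : (2 * j < n)%N -> (2 * k < n)%N -> j <> k ->
  on_rnc (chain_mx j) x -> on_rnc (chain_mx k) x -> forall i, x 0 i != 0.
Proof.
move=> lt_2j_n lt_2k_n j_neq_k.
apply: monomial_meet_torus (chain_weight_neq0 j) (chain_weight_neq0 k) _ => [|i].
  lia.
by rewrite !chain_perm_endpoint //; lia.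
Qed.

Lemma chain_weight_out j (i : 'I_n.+1) : (2 * j < i)%N -> chain_weight j 0 i = 1.
Proof. by rewrite mxE => /ltn_geF ->. Qed.

Lemma chain_weight_in j (i : 'I_n.+1) :
  (i <= 2 * j)%N -> chain_weight j 0 i = (uphalf i).+1%:R.
Proof. by rewrite mxE => ->. Qed.

Lemma chain_nonadjacent j k x : (2 * k < n)%N -> (j + 2 <= k)%N ->
  ~ (on_rnc (chain_mx j) x /\ on_rnc (chain_mx k) x).
Proof.
move=> lt_2k_n le_j2_k [xj xk].
have lt_2j_n : (2 * j < n)%N by lia.
have j_neq_k : j <> k by lia.
have x_neq0 := chain_meet_torus lt_2j_n lt_2k_n j_neq_k xj xk.
have n_gt0 : (0 < n)%N by lia.
have [u [g [_ _ xE]]] := monomial_torus_affine n_gt0 xj x_neq0.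
have [v [h [_ _ xE']]] := monomial_torus_affine n_gt0 xk x_neq0.
pose a : 'I_n.+1 := inord (2 * j).+1.
pose b : 'I_n.+1 := inord (2 * j).+2.
pose c : 'I_n.+1 := inord (2 * j).+3.
have [va vb vc] :
    [/\ a = (2 * j).+1 :> nat, b = (2 * j).+2 :> nat & c = (2 * j).+3 :> nat].
  by split; rewrite inordK; lia.
have pj : (chain_perm j a + chain_perm j c = (chain_perm j b).*2)%N.
  by rewrite !chain_perm_gt //; lia.
have pk : (chain_perm k a + chain_perm k c = (chain_perm k b).*2)%N.
  by rewrite !chain_perm_le //; lia.
have := monomial_quadric pj xE; rewrite !chain_weight_out; try lia.
rewrite expr1n !mulr1 => qj.
have := monomial_quadric pk xE'; rewrite !chain_weight_in; try lia.
have [-> -> ->] : [/\ uphalf a = j.+1, uphalf b = j.+1 & uphalf c = j.+2].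
  by split; lia.
move=> qk.
have : x 0 b ^+ 2 * j.+2%:R =
    x 0 b ^+ 2 * (j.+2%:R * j.+3%:R) - x 0 a * x 0 c * j.+2%:R ^+ 2.
  by rewrite qj; ring.
rewrite qk subrr.
by apply/eqP; rewrite mulf_eq0 pnatr_eq0 orbF expf_eq0 (negPf (x_neq0 b)).
Qed.

Section Adjacent.
Variable j : nat.
Hypothesis lt_2j1_n : (2 * j.+1 < n)%N.

Let lt_2j_n : (2 * j < n)%N. Proof. lia. Qed.
Let n_gt0 : (0 < n)%N. Proof. lia. Qed.
Let K : C := j.+2%:R.
Let K_neq0 : K != 0. Proof. by rewrite pnatr_eq0. Qed.

Let i0 : 'I_n.+1 := inord (2 * j).
Let i1 : 'I_n.+1 := inord (2 * j).+1.
Let i2 : 'I_n.+1 := inord (2 * j).+2.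
Let i3 : 'I_n.+1 := inord (2 * j).+3.
Let i0E : i0 = 2 * j :> nat. Proof. rewrite inordK; lia. Qed.
Let i1E : i1 = (2 * j).+1 :> nat. Proof. rewrite inordK; lia. Qed.
Let i2E : i2 = (2 * j).+2 :> nat. Proof. rewrite inordK; lia. Qed.
Let i3E : i3 = (2 * j).+3 :> nat. Proof. rewrite inordK; lia. Qed.

Lemma chain_perm_succ i : i != i1 -> i != i2 ->
  chain_perm j.+1 i = (chain_perm j i).+2 :> nat /\
  chain_weight j.+1 0 i = chain_weight j 0 i.
Proof.
rewrite -!(inj_eq val_inj) /= i1E i2E => i_neq1 i_neq2; have := ltn_ord i.
rewrite !chain_permE // !mxE; case: (leqP i (2 * j)) => [le_i | lt_i] lt_in.
  by rewrite (_ : (i <= 2 * j.+1)%N = true); [split=> //; lia | lia].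
by rewrite (_ : (i <= 2 * j.+1)%N = false); [split=> //; lia | lia].
Qed.

Let perm_i1 : chain_perm j i1 = n :> nat /\ chain_perm j.+1 i1 = 1%N :> nat.
Proof. rewrite chain_perm_gt ?chain_perm_le; lia. Qed.
Let perm_i2 : chain_perm j i2 = n.-1 :> nat /\ chain_perm j.+1 i2 = 0%N :> nat.
Proof. rewrite chain_perm_gt ?chain_perm_le; lia. Qed.
Let perm_i3 : chain_perm j i3 = n.-2 :> nat /\ chain_perm j.+1 i3 = n :> nat.
Proof. rewrite !chain_perm_gt; lia. Qed.
Let perm_i0 : chain_perm j i0 = 0%N :> nat /\ chain_perm j.+1 i0 = 2 :> nat.
Proof. rewrite !chain_perm_le; lia. Qed.

Let weight_i1 : chain_weight j 0 i1 = 1 /\ chain_weight j.+1 0 i1 = K.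
Proof.
by rewrite chain_weight_out ?chain_weight_in ?i1E; try lia; split=> //; congr _%:R; lia.
Qed.
Let weight_i2 : chain_weight j 0 i2 = 1 /\ chain_weight j.+1 0 i2 = K.
Proof.
by rewrite chain_weight_out ?chain_weight_in ?i2E; try lia; split=> //; congr _%:R; lia.
Qed.
Let weight_i3 : chain_weight j 0 i3 = 1 /\ chain_weight j.+1 0 i3 = 1.
Proof. by rewrite !chain_weight_out // i3E; lia. Qed.

Let root_neq0 w : w ^+ n.+1 = K -> w != 0.
Proof. by move=> wK; apply: contraNneq K_neq0 => w0; rewrite -wK w0 expr0n. Qed.

Lemma chain_param_succ w : w ^+ n.+1 = K ->
  rnc_param n 1 w *m chain_mx j.+1 = w ^+ 2 *: (rnc_param n 1 w *m chain_mx j).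
Proof.
move=> wK; apply/matrixP => a i.
rewrite (ord1 a) /chain_mx monomial_scale_affineE monomial_affineE.
have [-> | i_neq1] := eqVneq i i1.
  case: perm_i1 weight_i1 => -> -> [-> ->].
  by rewrite -wK !exprS; ring.
have [-> | i_neq2] := eqVneq i i2.
  case: perm_i2 weight_i2 => -> -> [-> ->].
  by rewrite -wK (_ : n.+1 = n.-1.+2); [rewrite !exprS; ring | lia].
have [-> ->] := chain_perm_succ i_neq1 i_neq2.
by rewrite -addn2 exprD; ring.
Qed.

Lemma chain_adjacent_meet x :
  on_rnc (chain_mx j) x -> on_rnc (chain_mx j.+1) x ->
  exists u g, [/\ u ^+ n.+1 = K, g != 0 & x = g *: (rnc_param n 1 u *m chain_mx j)].
Proof.
move=> xj xj1; have x_neq0 := chain_meet_torus lt_2j_n lt_2j1_n (@n_Sn j) xj xj1.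
have [u [g [u_neq0 g_neq0 xE]]] := monomial_torus_affine n_gt0 xj x_neq0.
have [v [h [_ h_neq0 xE']]] := monomial_torus_affine n_gt0 xj1 x_neq0.
exists u, g; split=> //.
have coord i : g * (u ^+ chain_perm j i * chain_weight j 0 i) =
               h * (v ^+ chain_perm j.+1 i * chain_weight j.+1 0 i).
  by rewrite -!monomial_scale_affineE -xE -xE'.
have := coord i1; have := coord i2; have := coord i3.
case: perm_i1 perm_i2 perm_i3 weight_i1 weight_i2 weight_i3.
move=> -> -> [-> ->] [-> ->] [-> ->] [-> ->] [-> ->].
have [m nE] : exists m, n = m.+3 by exists (n - 3)%N; lia.
rewrite nE /= => e3 e2 e1.
have uv : u = v.
  apply: (mulfI (mulf_neq0 h_neq0 K_neq0)).
  transitivity (u * (h * (v ^+ 0 * K))); first ring.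
  rewrite -e2; transitivity (g * (u ^+ m.+3 * 1)).
    by rewrite [u ^+ m.+3]exprS; ring.
  by rewrite e1; ring.
subst v; apply: (mulfI (mulf_neq0 g_neq0 (expf_neq0 m.+1 u_neq0))).
transitivity (g * (u ^+ m.+2 * 1) * u ^+ m.+3); first by rewrite !exprS; ring.
rewrite e2; transitivity (K * (h * (u ^+ m.+3 * 1))); first ring.
by rewrite -e3; ring.
Qed.

Lemma chain_ds_succ w : w ^+ n.+1 = K ->
  rnc_ds n 1 w *m chain_mx j.+1 =
  w ^+ 2 *: (rnc_ds n 1 w *m chain_mx j) + w ^+ 3 *: (rnc_dt n 1 w *m chain_mx j)
  + (- w) *: (rnc_dt n 1 w *m chain_mx j.+1).
Proof.
move=> wK; have := rnc_euler_mx (chain_mx j.+1) w.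
rewrite chain_param_succ // scalerA mulrC -scalerA -rnc_euler_mx => /(canRL (addrK _)) ->.
by rewrite scalerDr scalerA -exprSr scaleNr.
Qed.

Lemma chain_tangent_free w (x y z : C) : w ^+ n.+1 = K ->
  x *: (rnc_ds n 1 w *m chain_mx j) + y *: (rnc_dt n 1 w *m chain_mx j)
  + z *: (rnc_dt n 1 w *m chain_mx j.+1) = 0 ->
  [/\ x = 0, y = 0 & z = 0].
Proof.
move=> wK; have w_neq0 := root_neq0 wK.
set a := rnc_ds n 1 w *m _; set b := rnc_dt n 1 w *m _; set d := rnc_dt n 1 w *m _.
move=> /matrixP comb.
have coord i : x * a 0 i + y * b 0 i + z * d 0 i = 0 by move: (comb 0 i); rewrite !mxE.
move: (coord i2) (coord i1) (coord i0).
rewrite /a /b /d /chain_mx !monomial_dsE !monomial_dtE.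
have i0_neq1 : i0 != i1 by rewrite -(inj_eq val_inj) /= i0E i1E; lia.
have i0_neq2 : i0 != i2 by rewrite -(inj_eq val_inj) /= i0E i2E; lia.
have [_ ->] := chain_perm_succ i0_neq1 i0_neq2; set de := chain_weight j 0 i0.
case: perm_i0 perm_i1 perm_i2 weight_i1 weight_i2.
move=> -> -> [-> ->] [-> ->] [-> ->] [-> ->].
rewrite subn0 subnn (_ : (n - n.-1 = 1)%N); last lia.
have [m nE] : exists m, n = m.+2 by exists n.-2; lia.
rewrite nE /= in wK *.
set L2 := (X in X = 0 -> _ -> _ -> _); set L1 := (X in _ -> X = 0 -> _ -> _).
set L0 := (X in _ -> _ -> X = 0 -> _) => e2 e1 e0.
have mulIf0 (r q : C) : q != 0 -> r * q = 0 -> r = 0.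
  by move=> q_neq0 /eqP; rewrite mulf_eq0 (negPf q_neq0) orbF => /eqP.
have de_neq0 : de != 0 by apply: chain_weight_neq0.
have z0 : z = 0.
  apply: (mulIf0 _ (de * K * m.+3%:R)); first by rewrite !mulf_neq0 ?pnatr_eq0.
  transitivity (w ^+ m.+2 * L0 - m.+2%:R * de * w * L2 + m.+1%:R * de * L1).
    by rewrite /L0 /L1 /L2 -wK !exprS; ring.
  by rewrite e0 e1 e2 !mulr0 subrr addr0.
have y0 : y = 0.
  apply: (mulIf0 _ (m.+2%:R * w ^+ m.+1 * 1)).
    by rewrite !mulf_neq0 ?pnatr_eq0 ?expf_neq0 ?oner_neq0.
  by move: e1; rewrite /L1 z0 !mul0r mulr0 !addr0 add0r.
split=> //; apply: (mulIf0 _ (m.+2%:R * w ^+ 0 * de)).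
  by rewrite !mulf_neq0 ?pnatr_eq0 ?expf_neq0.
by move: e0; rewrite /L0 y0 z0 !mul0r !addr0.
Qed.

Lemma chain_tangent_rank w : w ^+ n.+1 = K ->
  \rank (col_mx (rnc_tangent (chain_mx j) 1 w)
                (rnc_tangent (chain_mx j.+1) 1 w)) = 3%N.
Proof.
move=> wK; rewrite /rnc_tangent (mxrank_col_mx_span (chain_ds_succ wK)).
by apply/eqP/row_free_col_mx3 => x y z /chain_tangent_free; apply.
Qed.

Let root_point_succ w : w ^+ n.+1 = K ->
  rnc_param n 1 w *m chain_mx j = w ^- 2 *: (rnc_param n 1 w *m chain_mx j.+1).
Proof.
by move=> wK; rewrite chain_param_succ // scalerA mulVf ?expf_neq0 ?root_neq0 // scale1r.
Qed.

Lemma chain_root_point_on w : w ^+ n.+1 = K ->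
  on_rnc (chain_mx j) (rnc_param n 1 w *m chain_mx j) /\
  on_rnc (chain_mx j.+1) (rnc_param n 1 w *m chain_mx j).
Proof.
move=> wK; have w_neq0 := root_neq0 wK; split.
  rewrite -[X in on_rnc _ X]scale1r.
  exact/on_monomial_affine/oner_neq0/w_neq0/chain_weight_neq0.
rewrite root_point_succ //.
by apply/on_monomial_affine; rewrite ?invr_neq0 ?expf_neq0 //; apply: chain_weight_neq0.
Qed.

Lemma chain_transversal w : w ^+ n.+1 = K ->
  transversal_at (chain_mx j) (chain_mx j.+1) (rnc_param n 1 w *m chain_mx j).
Proof.
move=> wK s t s' t'; have w_neq0 := root_neq0 wK.
rewrite -[X in rnc_at _ _ _ X -> _]scale1r.
move=> /(monomial_rnc_at_affine (chain_weight_neq0 _) n_gt0 w_neq0 (oner_neq0 C)).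
move=> [s_neq0 ->]; rewrite root_point_succ //.
move=> /(monomial_rnc_at_affine (chain_weight_neq0 _) n_gt0 w_neq0).
move=> /(_ (invr_neq0 (expf_neq0 2 w_neq0))).
move=> [s'_neq0 ->].
by rewrite !rnc_tangent_scale mxrank_col_mx_scale ?expf_neq0 // chain_tangent_rank.
Qed.

Lemma chain_adjacent : rnc_meet_nodally_gen (chain_mx j) (chain_mx j.+1).
Proof.
have [W [W_size W_uniq W_roots]] := nth_roots_uniq (ltn0Sn n) K_neq0.
have W_K (k : 'I_n.+1) : W`_k ^+ n.+1 = K by apply/eqP; rewrite -W_roots mem_nth ?W_size.
pose V : 'M[C]_n.+1 := (Vandermonde n.+1 (\row_k W`_k))^T.
have rowV k : row k (V *m chain_mx j) = rnc_param n 1 W`_k *m chain_mx j.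
  by rewrite row_mul; congr (_ *m _); apply/rowP => i; rewrite !mxE expr1n mul1r.
exists (V *m chain_mx j); split.
- rewrite unitmx_mul chain_mx_unit andbT unitmxE det_tr det_Vandermonde unitfE.
  apply/prodf_neq0 => a _; apply/prodf_neq0 => b lt_ab; rewrite !mxE subr_eq0.
  by rewrite nth_uniq ?W_size // eq_sym neq_ltn lt_ab.
- by move=> k; rewrite rowV; apply: chain_root_point_on.
- move=> x xj xj1; have [u [g [uK g_neq0 ->]]] := chain_adjacent_meet xj xj1.
  have u_in : u \in W by rewrite W_roots uK.
  have k_lt : (index u W < n.+1)%N by rewrite -W_size index_mem.
  by exists (Ordinal k_lt); rewrite rowV /= nth_index //; exists g.
- by move=> k; rewrite rowV; apply: chain_transversal.
Qed.

End Adjacent.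

Lemma chain_meets_disjoint j k x : (2 * j.+1 < n)%N -> (2 * k.+1 < n)%N -> j <> k ->
  ~ (on_rnc (chain_mx j) x /\ on_rnc (chain_mx j.+1) x /\
     on_rnc (chain_mx k) x /\ on_rnc (chain_mx k.+1) x).
Proof.
move=> lt_j lt_k j_neq_k [xj [xj1 [xk xk1]]].
have [lt_jk | lt_kj | //] := ltngtP j k.
  by apply: (@chain_nonadjacent j k.+1 x) => //; lia.
by apply: (@chain_nonadjacent k j.+1 x) => //; lia.
Qed.

End Chain.

Theorem lemma4p3 (R : realType) (n : nat) (hodd : odd n) (hn : (3 <= n)%N) :
  let m := (n.+1)./2 in
  exists A : nat -> 'M[R[i]]_n.+1,
    [/\ (forall j, (j < m)%N -> A j \in unitmx),
        (forall j, (j.+1 < m)%N -> rnc_meet_nodally_gen (A j) (A j.+1)),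
        (forall j k, (j.+1 < m)%N -> (k.+1 < m)%N -> j <> k ->
           forall x : 'rV[R[i]]_n.+1,
             ~ (on_rnc (A j) x /\ on_rnc (A j.+1) x /\
                on_rnc (A k) x /\ on_rnc (A k.+1) x)) &
        (forall j k, (k < m)%N -> (j + 2 <= k)%N ->
           forall x : 'rV[R[i]]_n.+1, ~ (on_rnc (A j) x /\ on_rnc (A k) x))].
Proof.
move=> m; have m2 : (2 * m = n.+1)%N.
  by have := odd_double_half n.+1; rewrite /= hodd -mul2n.
exists (chain_mx R[i] n); split.
- by move=> j _; apply: chain_mx_unit.
- by move=> j lt_j1_m; apply: chain_adjacent; lia.
- by move=> j k lt_j1_m lt_k1_m j_neq_k x; apply: chain_meets_disjoint; lia.
- by move=> j k lt_k_m le_j2_k x; apply: chain_nonadjacent; lia.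
Qed.
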